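(* Let $m,n\in\mathbb{N}$, let $\lambda_{\ell}>0$ for $1\le\ell\le m$, and let $\phi_{j,\ell}\in(0,\pi/2)$ for $1\le j\le n$, $1\le\ell\le m$. Then the $n\times n$ matrix \[ \left(\frac{1}{\prod_{\ell=1}^{m}\sin^{\lambda_{\ell}}(\phi_{j,\ell}+\phi_{k,\ell})}\right)_{j,k=1}^{n} \] is positive semidefinite.
   Context: A real symmetric (or complex) matrix $A=(a_{j,k})$ is positive semidefinite if $\sum_{j,k}a_{j,k}z_j\overline{z_k}\ge0$ for all complex $z_j$. *)

From mathcomp Require Import all_boot all_order all_algebra.
From mathcomp Require Import all_classical all_reals all_analysis.
From mathcomp Require Import complex.
Set Implicit Arguments. Unset Strict Implicit. Unset Printing Implicit Defensive.
Import Order.TTheory GRing.Theory Num.Theory.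
Local Open Scope ring_scope.
Local Open Scope complex_scope.

(* A real n x n matrix A is positive semidefinite if
   sum_{j,k} a_{j,k} z_j conj(z_k) >= 0 for all complex z_j.
   In the partially ordered field R[i], (0 <= w) means w is real and >= 0. *)
Definition psd (R : realType) (n : nat) (A : 'M[R]_n) : Prop :=
  forall z : 'I_n -> R[i],
    0 <= \sum_(j < n) \sum_(k < n) (A j k)%:C * z j * (z k)^*.

(* Put [A x = cos x + sin x] and [rho x = (cos x - sin x) / (cos x + sin x)]; on
   (0, pi/2) we have [A x > 0] and [|rho x| < 1], and
   [sin (a + b) = A a * A b * (1 - rho a * rho b) / 2].  Hence the matrix is
   [D K D] with [D] diagonal and
   [K j k = exp (sum_l lambda_l (ln 2 - ln (1 - rho_jl rho_kl)))].
   Since [- ln (1 - t) = sum_i t^i / i], the exponent is a pointwise limit of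
   nonnegative combinations of the Gram kernels [(rho_jl rho_kl)^i].  Gram
   kernels are closed under sums and Schur products, so the partial sums of
   the exponential series of a Gram kernel are Gram, and positive
   semidefiniteness passes to pointwise limits.  Finally the imaginary part of
   the hermitian form of a real symmetric matrix vanishes. *)

From mathcomp Require Import all_boot all_order all_algebra.
From mathcomp Require Import all_classical all_reals all_analysis.
From mathcomp Require Import complex ring lra.
Import Order.TTheory GRing.Theory Num.Theory.
Import numFieldNormedType.Exports.
Local Open Scope classical_set_scope.
Local Open Scope ring_scope.
Set Implicit Arguments. Unset Strict Implicit. Unset Printing Implicit Defensive.

Section LnSeries.
Variable R : realType.

Definition ln1B_remainder (N : nat) (t : R) :=
  ln (1 - t) + \sum_(i < N) i.+1%:R^-1 * t ^+ i.+1.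

Lemma ln1B_remainder0 N : ln1B_remainder N 0 = 0.
Proof.
by rewrite /ln1B_remainder subr0 ln1 add0r big1 // => i _; rewrite expr0n mulr0.
Qed.

Lemma is_derive_ln1B_remainder N (t : R) : t < 1 ->
  is_derive t 1 (ln1B_remainder N) (- t ^+ N / (1 - t)).
Proof.
move=> t_lt1; have t1_gt0 : 0 < 1 - t by rewrite subr_gt0.
have dln : is_derive t 1 (fun x : R => ln (1 - x)) (- (1 - t)^-1).
  have d1B : is_derive t 1 (fun x : R => 1 - x) (-1).
    by have := is_deriveB (is_derive_cst (1 : R) t 1) (is_derive_id t 1); rewrite sub0r.
  by have := is_derive1_comp (g := fun x : R => 1 - x) (is_derive1_ln t1_gt0) d1B;
    rewrite mulrN1.
have dsum : is_derive t 1 (fun x : R => \sum_(i < N) i.+1%:R^-1 * x ^+ i.+1)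
    (\sum_(i < N) t ^+ i).
  have -> : (fun x : R => \sum_(i < N) i.+1%:R^-1 * x ^+ i.+1) =
    \sum_(i < N) (fun x : R => i.+1%:R^-1 * x ^+ i.+1).
    by apply/funext => x; rewrite fct_sumE.
  apply: is_derive_sum => i.
  have := is_deriveZ i.+1%:R^-1 (is_deriveX i.+1 (is_derive_id t 1)).
  rewrite scalerA mulrA mulVf ?pnatr_eq0 // mul1r /= scaler1 => dXi.
  have -> : (fun x : R => i.+1%:R^-1 * x ^+ i.+1) = i.+1%:R^-1 *: id ^+ i.+1.
    by apply/funext => x /=; rewrite exprfctE.
  exact: dXi.
have -> : ln1B_remainder N = (fun x : R => ln (1 - x)) +
    (fun x : R => \sum_(i < N) i.+1%:R^-1 * x ^+ i.+1) by [].
apply: is_derive_eq (is_deriveD dln dsum) _.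
have t1_neq0 : 1 - t != 0 by rewrite gt_eqF.
apply: (mulIf t1_neq0); rewrite mulrDl mulNr mulVf // divfK //.
have -> : (\sum_(i < N) t ^+ i) * (1 - t) = 1 - t ^+ N.
  by rewrite -opprB mulrN mulrC -subrX1 opprB.
ring.
Qed.

Lemma norm_ln1B_remainder_derive_le N (w c : R) : `|w| < 1 -> `|c| <= `|w| ->
  `|- c ^+ N / (1 - c)| <= `|w| ^+ N / (1 - `|w|).
Proof.
move=> w_lt1 cw.
have c_lt1 : c < 1 by rewrite (le_lt_trans (ler_norm c)) ?(le_lt_trans cw).
have c1_gt0 : 0 < 1 - c by rewrite subr_gt0.
rewrite normrM normrN normrX normfV (gtr0_norm c1_gt0).
apply: ler_pM.
- by rewrite exprn_ge0.
- by rewrite invr_ge0 ltW.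
- by rewrite lerXn2r ?nnegrE.
- by rewrite lef_pV2 ?posrE ?subr_gt0 // lerD2l lerN2 (le_trans (ler_norm c)).
Qed.

Lemma norm_ln1B_remainder_le N (w : R) : `|w| < 1 ->
  `|ln1B_remainder N w| <= `|w| ^+ N.+1 / (1 - `|w|).
Proof.
move=> w_lt1.
have mvt a b : a <= b -> b < 1 -> exists2 c, c \in `[a, b] &
    ln1B_remainder N b - ln1B_remainder N a = (- c ^+ N / (1 - c)) * (b - a).
  move=> ab b_lt1; apply: MVT_segment => // [x|].
    by rewrite in_itv /= => /andP[_ xb]; exact/is_derive_ln1B_remainder/(lt_trans xb).
  apply: derivable_within_continuous => x; rewrite in_itv /= => /andP[_ xb].
  by have [] := is_derive_ln1B_remainder N (le_lt_trans xb b_lt1).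
rewrite exprSr mulrAC.
have [w_ge0 | w_lt0] := lerP 0 w.
  have [c] := mvt 0 w w_ge0 (le_lt_trans (ler_norm w) w_lt1).
  rewrite in_itv /= ln1B_remainder0 !subr0 => /andP[c_ge0 cw] ->.
  rewrite normrM ler_wpM2r // norm_ln1B_remainder_derive_le //.
  by rewrite !ger0_norm.
have [c] := mvt w 0 (ltW w_lt0) ltr01.
rewrite in_itv /= ln1B_remainder0 sub0r add0r => /andP[wc c_le0] /eqP.
rewrite eqr_oppLR => /eqP ->; rewrite normrN normrM normrN ler_wpM2r //.
by rewrite norm_ln1B_remainder_derive_le // ler0_norm // ltr0_norm // lerN2.
Qed.

Lemma cvg_ln1B_series (w : R) : `|w| < 1 ->
  \sum_(i < N) i.+1%:R^-1 * w ^+ i.+1 @[N --> \oo] --> - ln (1 - w).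
Proof.
move=> w_lt1; set b := fun N : nat => `|w| ^+ N.+1 / (1 - `|w|).
have b_cvg0 : b N @[N --> \oo] --> 0.
  have -> : b = (fun N => `|w| * `|w| ^+ N / (1 - `|w|)).
    by apply/funext => N; rewrite /b exprS.
  have w_pow : `|w| ^+ N @[N --> \oo] --> 0 by apply: cvg_expr; rewrite normr_id.
  rewrite -(mul0r (1 - `|w|)^-1) -(mulr0 `|w|).
  by apply: cvgM; [apply: cvgM |]; rewrite ?w_pow //; exact: cvg_cst.
have rem_cvg0 : ln1B_remainder N w @[N --> \oo] --> 0.
  apply: (@squeeze_cvgr _ \oo _ _ (fun N => - b N) b).
    by apply: nearW => N; rewrite -ler_norml norm_ln1B_remainder_le.
  - by rewrite -oppr0; apply: cvgN.
  - exact: b_cvg0.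
have -> : (fun N => \sum_(i < N) i.+1%:R^-1 * w ^+ i.+1) =
    (fun N => ln1B_remainder N w - ln (1 - w)).
  by apply/funext => N; rewrite /ln1B_remainder addrC addKr.
by rewrite -[X in _ --> X]sub0r; apply: cvgB => //; exact: cvg_cst.
Qed.

End LnSeries.

Section Kernels.
Variables (R : realType) (n : nat).

Definition quad_form (A : 'I_n -> 'I_n -> R) (u : 'I_n -> R) :=
  \sum_(j < n) \sum_(k < n) A j k * u j * u k.

Definition psd_kernel (A : 'I_n -> 'I_n -> R) := forall u, 0 <= quad_form A u.

Definition gram_kernel (A : 'I_n -> 'I_n -> R) :=
  exists (I : finType) (f : I -> 'I_n -> R),
    forall j k, A j k = \sum_(i : I) f i j * f i k.

Lemma eq_psd_kernel A B : (forall j k, A j k = B j k) ->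
  psd_kernel A -> psd_kernel B.
Proof.
move=> AB psdA u; rewrite /quad_form.
by under eq_bigr => j _ do under eq_bigr => k _ do rewrite -AB; exact: psdA.
Qed.

Lemma eq_gram_kernel A B : (forall j k, A j k = B j k) ->
  gram_kernel A -> gram_kernel B.
Proof. by move=> AB [I [f Af]]; exists I, f => j k; rewrite -AB. Qed.

Lemma gram_psd_kernel A : gram_kernel A -> psd_kernel A.
Proof.
move=> [I [f Af]] u.
have -> : quad_form A u =
    \sum_(i : I) (\sum_(j < n) f i j * u j) * (\sum_(k < n) f i k * u k).
  rewrite /quad_form.
  under eq_bigr => j _ do under eq_bigr => k _ do rewrite Af !mulr_suml.
  under eq_bigr => j _ do rewrite exchange_big.
  rewrite exchange_big; apply: eq_bigr => i _.
  rewrite mulr_suml; apply: eq_bigr => j _.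
  rewrite mulr_sumr; apply: eq_bigr => k _.
  by rewrite mulrACA !mulrA.
by apply: sumr_ge0 => i _; rewrite -expr2 sqr_ge0.
Qed.

Lemma gram_kernel_rank1 (f : 'I_n -> R) : gram_kernel (fun j k => f j * f k).
Proof. by exists 'I_1, (fun _ => f) => j k; rewrite big_ord1. Qed.

Lemma gram_kernel_cst c : 0 <= c -> gram_kernel (fun _ _ => c).
Proof.
move=> c_ge0; apply: eq_gram_kernel (gram_kernel_rank1 (fun _ => Num.sqrt c)).
by move=> j k; rewrite -expr2 sqr_sqrtr.
Qed.

Lemma gram_kernelD A B : gram_kernel A -> gram_kernel B ->
  gram_kernel (fun j k => A j k + B j k).
Proof.
move=> [I [f Af]] [J [g Bg]].
exists (I + J)%type, (fun x => match x with inl a => f a | inr b => g b end).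
by move=> j k; rewrite big_sumType Af Bg.
Qed.

Lemma gram_kernelM A B : gram_kernel A -> gram_kernel B ->
  gram_kernel (fun j k => A j k * B j k).
Proof.
move=> [I [f Af]] [J [g Bg]].
exists (I * J)%type, (fun x j => f x.1 j * g x.2 j) => j k.
rewrite Af Bg mulr_suml; under eq_bigr do rewrite mulr_sumr.
by rewrite pair_big /=; apply: eq_bigr => -[a b] _ /=; rewrite mulrACA.
Qed.

Lemma gram_kernelZ c A : 0 <= c -> gram_kernel A ->
  gram_kernel (fun j k => c * A j k).
Proof. by move=> c_ge0 gA; apply: gram_kernelM => //; exact: gram_kernel_cst. Qed.

Lemma gram_kernelX A i : gram_kernel A -> gram_kernel (fun j k => A j k ^+ i).
Proof.
move=> gA; elim: i => [|i gAi].
  by apply: eq_gram_kernel (gram_kernel_cst ler01) => j k; rewrite expr0.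
by apply: eq_gram_kernel (gram_kernelM gA gAi) => j k; rewrite exprS.
Qed.

Lemma gram_kernel_sum N (F : 'I_N -> 'I_n -> 'I_n -> R) :
  (forall i, gram_kernel (F i)) -> gram_kernel (fun j k => \sum_(i < N) F i j k).
Proof.
elim: N F => [|N IH] F gF.
  by apply: eq_gram_kernel (gram_kernel_cst (lexx 0)) => j k; rewrite big_ord0.
apply: eq_gram_kernel (gram_kernelD (IH _ (fun i => gF _)) (gF ord_max)).
by move=> j k; rewrite big_ord_recr.
Qed.

Lemma psd_kernel_lim (A : nat -> 'I_n -> 'I_n -> R) B :
  (forall N, psd_kernel (A N)) -> (forall j k, A N j k @[N --> \oo] --> B j k) ->
  psd_kernel B.
Proof.
move=> psdA AB u.
apply: (@closed_cvg _ _ \oo _ _ _ (@closed_ge _ 0) (nearW _ (psdA^~ u))).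
apply: (cvg_big add_continuous) => j _.
apply: (cvg_big add_continuous) => k _.
by apply: cvgM; [apply: cvgM; [exact: AB |] |]; exact: cvg_cst.
Qed.

Lemma psd_kernel_scale (d : 'I_n -> R) A : psd_kernel A ->
  psd_kernel (fun j k => d j * d k * A j k).
Proof.
move=> psdA u; have := psdA (fun j => d j * u j); rewrite /quad_form.
congr (_ <= _); apply: eq_bigr => j _; apply: eq_bigr => k _; ring.
Qed.

Lemma psd_kernel_expR G : gram_kernel G -> psd_kernel (fun j k => expR (G j k)).
Proof.
move=> gG; apply: (psd_kernel_lim (A := fun N j k => series (exp_coeff (G j k)) N)).
  move=> N; apply: gram_psd_kernel.
  apply: eq_gram_kernel (gram_kernel_sum (F := fun i j k => i`!%:R^-1 * G j k ^+ i) _).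
    move=> j k; rewrite /series /= big_mkord; apply: eq_bigr => i _.
    by rewrite /exp_coeff /= mulrC.
  by move=> i; apply: gram_kernelZ; [rewrite invr_ge0 | exact: gram_kernelX].
by move=> j k; exact: is_cvg_series_exp_coeff.
Qed.

Lemma psd_kernel_expR_sum_ln1B m (c a : 'I_m -> R) (x : 'I_m -> 'I_n -> R) :
  (forall l, 0 <= c l) -> (forall l, 0 <= a l) -> (forall l j, `|x l j| < 1) ->
  psd_kernel (fun j k => expR (\sum_(l < m) c l * (a l - ln (1 - x l j * x l k)))).
Proof.
move=> c_ge0 a_ge0 x_lt1.
pose G N l j k := c l * (a l + \sum_(i < N) i.+1%:R^-1 * (x l j * x l k) ^+ i.+1).
apply: (psd_kernel_lim (A := fun N j k => expR (\sum_(l < m) G N l j k))) => [N|j k].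
  apply/psd_kernel_expR/(gram_kernel_sum (F := G N)) => l.
  apply: gram_kernelZ (c_ge0 l) (gram_kernelD (gram_kernel_cst (a_ge0 l)) _).
  apply: (gram_kernel_sum (F := fun i j k => i.+1%:R^-1 * (x l j * x l k) ^+ i.+1)) => i.
  apply: gram_kernelZ; first by rewrite invr_ge0.
  exact/gram_kernelX/gram_kernel_rank1.
apply: (continuous_cvg _ (@continuous_expR _ _)).
apply: (cvg_big add_continuous) => l _; apply: cvgM; first exact: cvg_cst.
rewrite -[_ - _]/(a l + - ln _); apply: cvgD; first exact: cvg_cst.
apply: cvg_ln1B_series; rewrite normrM.
have := x_lt1 l j; have := x_lt1 l k.
by have := normr_ge0 (x l j); have := normr_ge0 (x l k); nra.
Qed.

End Kernels.

Section ComplexForm.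
Variable R : realType.
Local Open Scope complex_scope.

Lemma sum_complex (I : finType) (f g : I -> R) :
  \sum_i (f i +i* g i) = (\sum_i f i) +i* (\sum_i g i).
Proof. by elim/big_rec3: _ => // i x y z _ ->. Qed.

Lemma real_mul_conj (a : R) (z w : R[i]) : a%:C * z * w^* =
  (a * (complex.Re z * complex.Re w + complex.Im z * complex.Im w)) +i*
  (a * (complex.Im z * complex.Re w - complex.Re z * complex.Im w)).
Proof.
case: z => x y; case: w => x' y'; rewrite [in LHS]/GRing.mul /=.
by congr (_ +i* _); ring.
Qed.

Lemma psd_of_psd_kernel n (A : 'M[R]_n) : (forall j k, A j k = A k j) ->
  psd_kernel (fun j k => A j k) -> psd A.
Proof.
move=> A_sym psdA z; rewrite /psd.
under eq_bigr => j _ do under eq_bigr => k _ do rewrite real_mul_conj.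
under eq_bigr => j _ do rewrite sum_complex.
rewrite sum_complex lecE /=; apply/andP; split.
  under eq_bigr => j _ do under eq_bigr => k _ do rewrite mulrBr.
  under eq_bigr => j _ do rewrite sumrB.
  rewrite sumrB subr_eq0 exchange_big; apply/eqP.
  by apply: eq_bigr => j _; apply: eq_bigr => k _; rewrite A_sym; ring.
have -> : \sum_(j < n) \sum_(k < n)
      A j k * (complex.Re (z j) * complex.Re (z k) + complex.Im (z j) * complex.Im (z k)) =
    quad_form (fun j k => A j k) (fun j => complex.Re (z j)) +
    quad_form (fun j k => A j k) (fun j => complex.Im (z j)).
  rewrite /quad_form -big_split; apply: eq_bigr => j _; rewrite -big_split.
  by apply: eq_bigr => k _ /=; ring.
exact: addr_ge0.
Qed.

End ComplexForm.

Section SinSum.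
Variable R : realType.

(* [sc_ratio x = tan (pi/4 - x)] *)
Definition sc_ratio (x : R) := (cos x - sin x) / (cos x + sin x).

Lemma sinD_sc_ratio (a b : R) : cos a + sin a != 0 -> cos b + sin b != 0 ->
  sin (a + b) = (cos a + sin a) * (cos b + sin b) * ((1 - sc_ratio a * sc_ratio b) / 2).
Proof. by move=> a_neq0 b_neq0; rewrite sinD /sc_ratio; field; rewrite a_neq0 b_neq0. Qed.

Section AcuteAngle.
Variable x : R.
Hypothesis x_acute : 0 < x < pi / 2.

Lemma cos_sin_gt0 : 0 < cos x /\ 0 < sin x.
Proof.
have /andP[x_gt0 x_lt] := x_acute; split; last by apply: sin_gt0_pihalf; rewrite x_gt0.
apply: cos_gt0_pihalf; rewrite x_lt andbT (lt_trans _ x_gt0) //.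
by rewrite oppr_lt0 divr_gt0 ?pi_gt0.
Qed.

Lemma cosD_sin_gt0 : 0 < cos x + sin x.
Proof. by have [] := cos_sin_gt0; exact: addr_gt0. Qed.

Lemma norm_sc_ratio_lt1 : `|sc_ratio x| < 1.
Proof.
have [cos_gt0 sin_gt0] := cos_sin_gt0.
rewrite /sc_ratio normrM normfV (gtr0_norm cosD_sin_gt0) ltr_pdivrMr ?cosD_sin_gt0 //.
by rewrite mul1r ltr_norml; apply/andP; split; lra.
Qed.

End AcuteAngle.

Lemma ln_sinD (a b : R) : 0 < a < pi / 2 -> 0 < b < pi / 2 ->
  ln (sin (a + b)) = ln (cos a + sin a) + ln (cos b + sin b)
                     - (ln 2 - ln (1 - sc_ratio a * sc_ratio b)).
Proof.
move=> a_acute b_acute.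
have ab_lt1 : `|sc_ratio a * sc_ratio b| < 1.
  rewrite normrM; have := norm_sc_ratio_lt1 a_acute; have := norm_sc_ratio_lt1 b_acute.
  by have := normr_ge0 (sc_ratio a); have := normr_ge0 (sc_ratio b); nra.
have ab_ratio_gt0 : 0 < 1 - sc_ratio a * sc_ratio b.
  by rewrite subr_gt0 (le_lt_trans (ler_norm _)).
have [pa pb] := (cosD_sin_gt0 a_acute, cosD_sin_gt0 b_acute).
rewrite sinD_sc_ratio ?gt_eqF // !lnM ?posrE ?mulr_gt0 ?divr_gt0 //.
by rewrite lnV ?posrE //; ring.
Qed.

Lemma inv_prod_powR_sinD m (lambda a b : 'I_m -> R) :
  (forall l, 0 < a l < pi / 2) -> (forall l, 0 < b l < pi / 2) ->
  (\prod_(l < m) sin (a l + b l) `^ lambda l)^-1 =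
    expR (- \sum_(l < m) lambda l * ln (cos (a l) + sin (a l))) *
    expR (- \sum_(l < m) lambda l * ln (cos (b l) + sin (b l))) *
    expR (\sum_(l < m) lambda l * (ln 2 - ln (1 - sc_ratio (a l) * sc_ratio (b l)))).
Proof.
move=> a_acute b_acute.
have sinD_gt0 l : 0 < sin (a l + b l).
  have /andP[? ?] := a_acute l; have /andP[? ?] := b_acute l.
  by apply: sin_gt0_pi; apply/andP; split; lra.
have -> : \prod_(l < m) sin (a l + b l) `^ lambda l =
    expR (\sum_(l < m) lambda l * ln (sin (a l + b l))).
  by rewrite expR_sum; apply: eq_bigr => l _; rewrite /powR gt_eqF.
rewrite -expRN -!expRD; congr expR.
under eq_bigr => l _ do rewrite ln_sinD //.
by rewrite -!sumrN -!big_split; apply: eq_bigr => l _ /=; ring.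
Qed.

End SinSum.

Theorem mainTheorem5 (R : realType) (m n : nat) (lambda : 'I_m -> R)
  (phi : 'I_n -> 'I_m -> R) :
  (forall l, 0 < lambda l) ->
  (forall j l, 0 < phi j l < pi / 2) ->
  psd (\matrix_(j < n, k < n)
         (\prod_(l < m) (sin (phi j l + phi k l)) `^ (lambda l))^-1).
Proof.
move=> lambda_gt0 phi_acute.
pose d j := expR (- \sum_(l < m) lambda l * ln (cos (phi j l) + sin (phi j l))).
apply: psd_of_psd_kernel => [j k|].
  by rewrite !mxE; congr (_^-1); apply: eq_bigr => l _; rewrite addrC.
apply: (eq_psd_kernel _ (psd_kernel_scale d (psd_kernel_expR_sum_ln1B _ _ _))).
- by move=> j k; rewrite mxE inv_prod_powR_sinD.
- by move=> l; apply: ltW.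
- by move=> l; apply: ln_ge0; rewrite ler1n.
- by move=> l j; apply: norm_sc_ratio_lt1.
Qed.
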